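(* Let $n \ge 1$, let $0 < \alpha < \beta < \pi/2$, and set $\lambda = \frac{\cos\beta}{\cos\alpha}$, $\mu = \frac{\tan\alpha}{\tan\beta}$. Define $\Psi : \mathbf{R}^n \to \mathbf{R}^n$ by \[ \Psi(x_1,\dots,x_n) = \left(\lambda x_1,\dots,\lambda x_{n-1}, \lambda\mu x_n + \sqrt{(1-\lambda^2)(1-\mu^2)}\right). \] Then: (a) $\Psi$ is an affine bijection with $\Psi(B_n) \subset B_n$; (b) if $x \in E_{n,\alpha}$ then $\Psi(x) \in E_{n,\beta}$; (c) if $x,y \in E_{n,\alpha}$ then $\|\Psi(x)-\Psi(y)\| = \lambda\|x-y\|$; (d) if $x \in B_n$ satisfies $\Psi(x) \in S^{n-1}$, then $x \in E_{n,\alpha}$.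
   Context: $B_n$ is the closed Euclidean unit ball of $\mathbf{R}^n$, $S^{n-1}$ its boundary, $\|\cdot\|$ the Euclidean norm. For $\theta \in [-\pi/2,\pi/2]$, $E_{n,\theta} = \{(x_1,\dots,x_n) \in S^{n-1} : x_n = \sin\theta\}$. *)

From HB Require Import structures.
From mathcomp Require Import all_boot all_order all_algebra.
From mathcomp Require Import all_classical all_reals all_analysis.
Set Implicit Arguments. Unset Strict Implicit. Unset Printing Implicit Defensive.
Import Order.TTheory GRing.Theory Num.Theory.
Local Open Scope ring_scope.

(* Euclidean norm on R^n (the library norm on 'rV is the sup norm). *)
Definition enorm (R : realType) (n : nat) (x : 'rV[R]_n) : R :=
  Num.sqrt (\sum_(i < n) x ord0 i ^+ 2).

Definition ball_n (R : realType) (n : nat) : set 'rV[R]_n :=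
  [set x | enorm x <= 1].

Definition sphere_n (R : realType) (n : nat) : set 'rV[R]_n :=
  [set x | enorm x = 1].

Definition is_last (n : nat) (i : 'I_n) : bool := (val i == n.-1)%N.

(* x_n for x : R^n (n >= 1 intended) *)
Definition last_coord (R : realType) (n : nat) (x : 'rV[R]_n) : R :=
  \sum_(i < n | is_last i) x ord0 i.

Definition E_n (R : realType) (n : nat) (theta : R) : set 'rV[R]_n :=
  [set x | enorm x = 1 /\ last_coord x = sin theta].

Definition lam (R : realType) (alpha beta : R) : R := cos beta / cos alpha.
Definition mu (R : realType) (alpha beta : R) : R := tan alpha / tan beta.

Definition Psi (R : realType) (n : nat) (alpha beta : R) (x : 'rV[R]_n) : 'rV[R]_n :=
  \row_(i < n)
    (if is_last i
     then lam alpha beta * mu alpha beta * x ord0 i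
          + Num.sqrt ((1 - lam alpha beta ^+ 2) * (1 - mu alpha beta ^+ 2))
     else lam alpha beta * x ord0 i).

From HB Require Import structures.
From mathcomp Require Import all_boot all_order all_algebra.
From mathcomp Require Import all_classical all_reals all_analysis.
From mathcomp Require Import ring lra.

(* With s = sin alpha and kappa = lam^2 (1 - mu^2) > 0, expanding with
   cos^2 = 1 - sin^2 gives
     ||Psi x||^2 = 1 - lam^2 (1 - ||x||^2) - kappa (x_n - s)^2:
   the translation of Psi is exactly what completes the square at x_n = s.
   Hence Psi maps B_n into B_n, and x in B_n is sent to the sphere only if
   ||x|| = 1 and x_n = s.  The same constants give lam mu s + sqrt(...) =
   sin beta, and on each hyperplane x_n = const, Psi is a homothety of ratio
   lam. *)
Import Order.TTheory GRing.Theory Num.Theory.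
Local Open Scope ring_scope.
Local Open Scope classical_set_scope.

Section EuclideanNorm.
Variable R : realType.

Lemma enorm_ge0 n (x : 'rV[R]_n) : 0 <= enorm x.
Proof. exact: sqrtr_ge0. Qed.

Lemma enorm_sq n (x : 'rV[R]_n) : enorm x ^+ 2 = \sum_i x ord0 i ^+ 2.
Proof. by rewrite sqr_sqrtr // sumr_ge0 // => i _; rewrite sqr_ge0. Qed.

Lemma enormZ n (a : R) (x : 'rV[R]_n) : enorm (a *: x) = `|a| * enorm x.
Proof.
rewrite /enorm -sqrtr_sqr -sqrtrM ?sqr_ge0 // mulr_sumr.
by congr Num.sqrt; apply: eq_bigr => i _; rewrite mxE exprMn.
Qed.

Lemma enorm_le1 n (x : 'rV[R]_n) : (enorm x <= 1) = (enorm x ^+ 2 <= 1).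
Proof. by rewrite expr_le1 ?enorm_ge0. Qed.

Lemma enorm_eq1 n (x : 'rV[R]_n) : (enorm x == 1) = (enorm x ^+ 2 == 1).
Proof. by rewrite -[X in _ ^+ 2 == X](expr1n _ 2) eqrXn2 ?enorm_ge0. Qed.

Variable k : nat.

Lemma is_lastE (i : 'I_k.+1) : is_last i = (i == ord_max).
Proof. by rewrite /is_last -val_eqE. Qed.

Lemma last_coordE (x : 'rV[R]_k.+1) : last_coord x = x ord0 ord_max.
Proof. by rewrite /last_coord (big_pred1 ord_max) // => i; rewrite is_lastE. Qed.

Lemma sum_sq_split_last (x : 'rV[R]_k.+1) :
  \sum_i x ord0 i ^+ 2 = \sum_(i | ~~ is_last i) x ord0 i ^+ 2 + x ord0 ord_max ^+ 2.
Proof.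
rewrite (bigID (@is_last _)) /= addrC; congr (_ + _).
by rewrite (big_pred1 ord_max) // => i; rewrite is_lastE.
Qed.

End EuclideanNorm.

Section PsiMap.
Variables (R : realType) (k : nat) (alpha beta : R).

Local Notation lam := (lam alpha beta).
Local Notation mu := (mu alpha beta).
Local Notation Psi := (@Psi R k.+1 alpha beta).

Definition psi_shift : R := Num.sqrt ((1 - lam ^+ 2) * (1 - mu ^+ 2)).

Lemma Psi_last (x : 'rV[R]_k.+1) :
  Psi x ord0 ord_max = lam * mu * x ord0 ord_max + psi_shift.
Proof. by rewrite mxE is_lastE eqxx. Qed.

Lemma Psi_affine : exists (A : 'M[R]_k.+1) (b : 'rV[R]_k.+1),
  forall x, Psi x = x *m A + b.
Proof.
exists (diag_mx (\row_i (if is_last i then lam * mu else lam))).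
exists (\row_i (if is_last i then psi_shift else 0)) => x.
apply/rowP => j; rewrite mul_mx_diag !mxE.
by case: (is_last j); rewrite ?addr0 mulrC.
Qed.

Lemma Psi_bijective : lam != 0 -> mu != 0 -> bijective Psi.
Proof.
move=> lam0 mu0.
exists (fun y : 'rV[R]_k.+1 =>
  \row_i (if is_last i then (y ord0 i - psi_shift) / (lam * mu) else y ord0 i / lam)).
  move=> x; apply/rowP => j; rewrite !mxE -/psi_shift.
  by case: (is_last j); field; rewrite ?lam0 ?mu0.
move=> y; apply/rowP => j; rewrite !mxE -/psi_shift.
by case: (is_last j); field; rewrite ?lam0 ?mu0.
Qed.

Lemma Psi_sub_same_last (x y : 'rV[R]_k.+1) :
  last_coord x = last_coord y -> Psi x - Psi y = lam *: (x - y).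
Proof.
rewrite !last_coordE => xy; apply/rowP => j; rewrite !mxE.
case: ifP => [/[!is_lastE] /eqP -> | _]; last by ring.
by rewrite xy; ring.
Qed.

Lemma enorm_Psi_sq (x : 'rV[R]_k.+1) :
  enorm (Psi x) ^+ 2
  = lam ^+ 2 * \sum_(i | ~~ is_last i) x ord0 i ^+ 2
    + (lam * mu * x ord0 ord_max + psi_shift) ^+ 2.
Proof.
rewrite enorm_sq sum_sq_split_last Psi_last mulr_sumr.
by congr (_ + _); apply: eq_bigr => i /negbTE li; rewrite mxE li exprMn.
Qed.

Definition psi_defect : R := lam ^+ 2 * (1 - mu ^+ 2).

Hypotheses (alpha_gt0 : 0 < alpha) (alpha_lt_beta : alpha < beta)
  (beta_lt_pi2 : beta < pi / 2).

Local Notation s := (sin alpha).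
Local Notation s' := (sin beta).

Let alpha_lt_pi2 : alpha < pi / 2. Proof. exact: lt_trans beta_lt_pi2. Qed.
Let beta_gt0 : 0 < beta. Proof. exact: lt_trans alpha_gt0 _. Qed.

Let gt_neg_pi2 (x : R) : 0 < x -> - (pi / 2) < x.
Proof. by apply: lt_trans; rewrite oppr_lt0 divr_gt0 ?pi_gt0. Qed.

Let sin_alpha_gt0 : 0 < s.
Proof. by rewrite sin_gt0_pihalf // alpha_gt0 alpha_lt_pi2. Qed.

Let sin_alpha_lt : s < s'.
Proof.
by rewrite ltr_sin // in_itv /=; apply/andP; split; apply: ltW; rewrite ?gt_neg_pi2.
Qed.

Let cos_alpha_gt0 : 0 < cos alpha.
Proof. by rewrite cos_gt0_pihalf // gt_neg_pi2. Qed.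

Let cos_beta_gt0 : 0 < cos beta.
Proof. by rewrite cos_gt0_pihalf // gt_neg_pi2. Qed.

Let cos_alpha_neq0 : cos alpha != 0. Proof. exact: lt0r_neq0. Qed.
Let cos_beta_neq0 : cos beta != 0. Proof. exact: lt0r_neq0. Qed.
Let sin_beta_gt0 : 0 < s'. Proof. exact: lt_trans sin_alpha_gt0 sin_alpha_lt. Qed.
Let sin_beta_neq0 : s' != 0. Proof. exact: lt0r_neq0. Qed.

Lemma lam_gt0 : 0 < lam.
Proof. exact: divr_gt0. Qed.

Lemma mu_gt0 : 0 < mu.
Proof. by rewrite /mu /tan !divr_gt0. Qed.

Lemma lam_sqE : lam ^+ 2 = (1 - s' ^+ 2) / (1 - s ^+ 2).
Proof. by rewrite /lam expr_div_n !cos2sin2. Qed.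

Lemma mu_sqE : mu ^+ 2 = s ^+ 2 * (1 - s' ^+ 2) / ((1 - s ^+ 2) * s' ^+ 2).
Proof.
rewrite -!cos2sin2 /mu /tan.
by field; rewrite cos_alpha_neq0 cos_beta_neq0 sin_beta_neq0.
Qed.

Lemma lam_muE : lam * mu = (1 - s' ^+ 2) * s / ((1 - s ^+ 2) * s').
Proof.
rewrite -!cos2sin2 /lam /mu /tan.
by field; rewrite cos_alpha_neq0 cos_beta_neq0 sin_beta_neq0.
Qed.

Let one_sub_sin_alpha_neq0 : 1 - s ^+ 2 != 0.
Proof. by rewrite -cos2sin2 expf_neq0. Qed.

Let sin_sq_lt : s ^+ 2 < s' ^+ 2.
Proof. by rewrite ltrXn2r ?ltW. Qed.

Lemma psi_shiftE : psi_shift = (s' ^+ 2 - s ^+ 2) / ((1 - s ^+ 2) * s').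
Proof.
rewrite /psi_shift lam_sqE mu_sqE.
have -> : (1 - (1 - s' ^+ 2) / (1 - s ^+ 2))
          * (1 - s ^+ 2 * (1 - s' ^+ 2) / ((1 - s ^+ 2) * s' ^+ 2))
          = ((s' ^+ 2 - s ^+ 2) / ((1 - s ^+ 2) * s')) ^+ 2.
  by field; rewrite one_sub_sin_alpha_neq0 sin_beta_neq0.
by rewrite sqrtr_sqr ger0_norm // divr_ge0 ?mulr_ge0 -?cos2sin2 ?sqr_ge0 ?subr_ge0 ?ltW.
Qed.

Lemma psi_defectE :
  psi_defect = (1 - s' ^+ 2) * (s' ^+ 2 - s ^+ 2) / ((1 - s ^+ 2) ^+ 2 * s' ^+ 2).
Proof.
rewrite /psi_defect lam_sqE mu_sqE.
by field; rewrite one_sub_sin_alpha_neq0 sin_beta_neq0.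
Qed.

Lemma psi_defect_gt0 : 0 < psi_defect.
Proof.
by rewrite psi_defectE -!cos2sin2 divr_gt0 ?mulr_gt0 ?exprn_gt0 ?subr_gt0.
Qed.

Lemma Psi_last_sin : lam * mu * s + psi_shift = s'.
Proof.
rewrite lam_muE psi_shiftE.
by field; rewrite one_sub_sin_alpha_neq0 sin_beta_neq0.
Qed.

Lemma Psi_sq_identity (S t : R) :
  lam ^+ 2 * S + (lam * mu * t + psi_shift) ^+ 2
  = 1 - lam ^+ 2 * (1 - (S + t ^+ 2)) - psi_defect * (t - s) ^+ 2.
Proof.
have lam_mu_shift : lam * mu * psi_shift = psi_defect * s.
  rewrite lam_muE psi_shiftE psi_defectE.
  by field; rewrite one_sub_sin_alpha_neq0 sin_beta_neq0.
have shift_sq : psi_shift ^+ 2 = 1 - lam ^+ 2 - psi_defect * s ^+ 2.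
  rewrite psi_shiftE psi_defectE lam_sqE.
  by field; rewrite one_sub_sin_alpha_neq0 sin_beta_neq0.
have -> : (lam * mu * t + psi_shift) ^+ 2 =
    lam ^+ 2 * mu ^+ 2 * t ^+ 2 + 2 * (lam * mu * psi_shift) * t + psi_shift ^+ 2.
  by ring.
by rewrite lam_mu_shift shift_sq /psi_defect; ring.
Qed.

Lemma enorm_PsiE (x : 'rV[R]_k.+1) :
  enorm (Psi x) ^+ 2 = 1 - lam ^+ 2 * (1 - enorm x ^+ 2)
                       - psi_defect * (last_coord x - s) ^+ 2.
Proof.
by rewrite enorm_Psi_sq Psi_sq_identity enorm_sq sum_sq_split_last last_coordE.
Qed.

Lemma Psi_ball_sub : Psi @` (@ball_n R k.+1) `<=` (@ball_n R k.+1).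
Proof.
move=> _ [x /= x_le1 <-]; rewrite /ball_n /= enorm_le1 enorm_PsiE.
move: x_le1; rewrite /ball_n /= enorm_le1 => x_le1.
have : 0 <= lam ^+ 2 * (1 - enorm x ^+ 2) by rewrite mulr_ge0 ?sqr_ge0 ?subr_ge0.
have : 0 <= psi_defect * (last_coord x - s) ^+ 2.
  by rewrite mulr_ge0 ?sqr_ge0 // ltW // psi_defect_gt0.
lra.
Qed.

Lemma Psi_E_n x : @E_n R k.+1 alpha x -> @E_n R k.+1 beta (Psi x).
Proof.
move=> [x1 xn]; split.
  by apply/eqP; rewrite enorm_eq1 enorm_PsiE x1 xn expr1n !subrr expr0n /= !mulr0 !subr0.
by rewrite !last_coordE Psi_last -last_coordE xn Psi_last_sin.
Qed.

Lemma enorm_Psi_sub x y : @E_n R k.+1 alpha x -> @E_n R k.+1 alpha y ->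
  enorm (Psi x - Psi y) = lam * enorm (x - y).
Proof.
move=> [_ xn] [_ yn].
by rewrite Psi_sub_same_last ?xn ?yn // enormZ ger0_norm // ltW // lam_gt0.
Qed.

Lemma E_n_of_Psi_sphere x :
  @ball_n R k.+1 x -> @sphere_n R k.+1 (Psi x) -> @E_n R k.+1 alpha x.
Proof.
rewrite /ball_n /sphere_n /= enorm_le1 => x_le1 /eqP.
rewrite enorm_eq1 enorm_PsiE => /eqP Psi1.
have u0 : 0 <= lam ^+ 2 * (1 - enorm x ^+ 2) by rewrite mulr_ge0 ?sqr_ge0 ?subr_ge0.
have v0 : 0 <= psi_defect * (last_coord x - s) ^+ 2.
  by rewrite mulr_ge0 ?sqr_ge0 // ltW // psi_defect_gt0.
have /eqP : lam ^+ 2 * (1 - enorm x ^+ 2) = 0 by lra.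
rewrite mulf_eq0 sqrf_eq0 (gt_eqF lam_gt0) subr_eq0 eq_sym -enorm_eq1 => /eqP x1.
have /eqP : psi_defect * (last_coord x - s) ^+ 2 = 0 by lra.
by rewrite mulf_eq0 sqrf_eq0 (gt_eqF psi_defect_gt0) subr_eq0 => /eqP.
Qed.

End PsiMap.

Theorem lemma6 (R : realType) (n : nat) (alpha beta : R)
  (hn : (1 <= n)%N) (ha : 0 < alpha) (hab : alpha < beta) (hb : beta < pi / 2) :
  [/\ ((exists (A : 'M[R]_n) (b : 'rV[R]_n), forall x, Psi alpha beta x = x *m A + b)
       /\ bijective (Psi alpha beta : 'rV[R]_n -> 'rV[R]_n)
       /\ Psi alpha beta @` (@ball_n R n) `<=` (@ball_n R n)),
      (forall x, @E_n R n alpha x -> @E_n R n beta (Psi alpha beta x)),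
      (forall x y, @E_n R n alpha x -> @E_n R n alpha y ->
         enorm (Psi alpha beta x - Psi alpha beta y) = lam alpha beta * enorm (x - y))
    & (forall x, (@ball_n R n) x -> (@sphere_n R n) (Psi alpha beta x) -> @E_n R n alpha x)].
Proof.
case: n hn => // k _.
split; [split; [exact: Psi_affine | split] | | |].
- by apply: Psi_bijective; apply: lt0r_neq0; [exact: lam_gt0 | exact: mu_gt0].
- exact: Psi_ball_sub.
- exact: Psi_E_n.
- exact: enorm_Psi_sub.
- exact: E_n_of_Psi_sphere.
Qed.
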